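(* Let $m\ge2$, $n=2m+1$, and consider $$(P):\ \sup\ x_m\ \text{ s.t. }\ x_1(E_1+E_{m+1})+\sum_{i=2}^{m-1}x_i(E_i+E_{m+i}+E_{i-1,n}+E_{m+i-1,n})+x_m(E_m-E_{2m}+E_{m-1,n}+E_{2m-1,n})\preceq I_{m+1}\oplus0_m,$$ with dual $(D)$. Then $\operatorname{val}(P)=0<\operatorname{val}(D)=1$.
   Context: $E_{ij}\in\mathcal S^n$ is the symmetric matrix whose only nonzero entries are $1$ in positions $(i,j)$ and $(j,i)$; $E_i:=E_{ii}$. For $(P)$: $\sup\{c^Tx:\sum_ix_iA_i\preceq B\}$ the dual is $(D)$: $\inf\{B\bullet Y:A_i\bullet Y=c_i\ \forall i,\ Y\succeq0\}$, $S\bullet T=\operatorname{trace}(ST)$. *)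

From HB Require Import structures.
From mathcomp Require Import all_boot all_order all_algebra.
Set Implicit Arguments. Unset Strict Implicit. Unset Printing Implicit Defensive.
Import Order.TTheory GRing.Theory Num.Theory.
Local Open Scope ring_scope.

(* E_{ij} in S^n, with 1-based indices i j (as in the paper):
   entries 1 at positions (i,j) and (j,i), 0 elsewhere.  E_i := E_{ii}. *)
Definition Esym (R : pzRingType) (n i j : nat) : 'M[R]_n :=
  \matrix_(k < n, l < n)
    (if ((k.+1 == i) && (l.+1 == j)) || ((k.+1 == j) && (l.+1 == i)) then 1 else 0).

Definition psd (R : numDomainType) (n : nat) (A : 'M[R]_n) : Prop :=
  A^T = A /\ forall v : 'cV[R]_n, 0 <= (v^T *m A *m v) 0 0.

Definition loewner_le (R : numDomainType) (n : nat) (A B : 'M[R]_n) : Prop :=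
  psd (B - A).

Definition frob (R : pzRingType) (n : nat) (S T : 'M[R]_n) : R := \tr (S *m T).

(* The constraint matrices A_i (1-based i, 1 <= i <= m) in S^(2m+1), n = 2m+1. *)
Definition Amat (R : pzRingType) (m i : nat) : 'M[R]_(2 * m + 1) :=
  let n := (2 * m + 1)%N in
  if i == 1%N then Esym R n 1 1 + Esym R n (m + 1) (m + 1)
  else if i == m then
    Esym R n m m - Esym R n (2 * m) (2 * m) + Esym R n (m - 1) n
    + Esym R n (2 * m - 1) n
  else
    Esym R n i i + Esym R n (m + i) (m + i) + Esym R n (i - 1) n
    + Esym R n (m + i - 1) n.

Definition Bmat (R : pzRingType) (m : nat) : 'M[R]_(2 * m + 1) :=
  \matrix_(k < 2 * m + 1, l < 2 * m + 1) (if (k == l) && (k < m + 1)%N then 1 else 0).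

Definition cvec (R : pzRingType) (m i : nat) : R := if i == m then 1 else 0.

(* Primal feasibility: sum_i x_i A_i ⪯ B;  x is indexed by 'I_m, x_(i+1) := x i 0. *)
Definition primal_feasible (R : numDomainType) (m : nat) (x : 'cV[R]_m) : Prop :=
  loewner_le (\sum_(i < m) x i 0 *: Amat R m i.+1) (Bmat R m).

Definition primal_obj (R : pzRingType) (m : nat) (x : 'cV[R]_m) : R :=
  \sum_(i < m) cvec R m i.+1 * x i 0.

Definition dual_feasible (R : numDomainType) (m : nat) (Y : 'M[R]_(2 * m + 1)) : Prop :=
  (forall i : 'I_m, frob (Amat R m i.+1) Y = cvec R m i.+1) /\ psd Y.

Definition is_sup (R : numDomainType) (S : R -> Prop) (s : R) : Prop :=
  (forall y, S y -> y <= s) /\ (forall u, (forall y, S y -> y <= u) -> s <= u).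

Definition is_inf (R : numDomainType) (S : R -> Prop) (s : R) : Prop :=
  (forall y, S y -> s <= y) /\ (forall u, (forall y, S y -> u <= y) -> u <= s).

From HB Require Import structures.
From mathcomp Require Import all_boot all_order all_algebra.
From mathcomp Require Import zify ring lra.
Import Order.TTheory GRing.Theory Num.Theory.
Local Open Scope ring_scope.

(* Primal: the (n,n) entry of the slack B - sum_i x_i A_i is 0, so positive
   semidefiniteness kills its last column; its (m-1,n) entry is -x_m, hence every
   feasible point has objective 0.  Dual: by induction on i < m the constraints
   A_i . Y = 0 force Y_ii = Y_(m+i)(m+i) = 0, since the off-diagonal terms
   Y_(i-1)n and Y_(m+i-1)n lie in rows of Y that already vanish.  The last
   constraint then reads Y_mm - Y_(2m)(2m) = 1, so B . Y >= Y_mm >= 1, with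
   equality at Y = E_m. *)

Section QuadraticForm.
Context {R : comNzRingType} {n : nat}.
Implicit Types (S : 'M[R]_n) (p q : 'I_n).

Lemma quad_form_delta S p q :
  (delta_mx p 0)^T *m S *m delta_mx q 0 = (S p q)%:M :> 'M_1.
Proof.
by apply/matrixP => i j; rewrite !ord1 trmx_delta -rowE -colE !mxE /= mulr1n.
Qed.

Lemma quad_form_delta_pair S p q (a b : R) :
  let v : 'cV_n := a *: delta_mx p 0 + b *: delta_mx q 0 in
  (v^T *m S *m v) 0 0 = a * a * S p p + a * b * S p q + a * b * S q p + b * b * S q q.
Proof.
rewrite /= !linearD !linearZ /= !mulmxDl -!scalemxAl !linearD !linearZ /=.
by rewrite !quad_form_delta !mxE /=; ring.
Qed.

Lemma mxtrace_delta_mul p q S : \tr (delta_mx p q *m S) = S q p.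
Proof.
rewrite -(mul_delta_mx (0 : 'I_1)) -mulmxA mxtrace_mulC -rowE -colE.
by rewrite /mxtrace big_ord1 !mxE.
Qed.

Lemma frobD (A B S : 'M[R]_n) : frob (A + B) S = frob A S + frob B S.
Proof. by rewrite /frob mulmxDl mxtraceD. Qed.

Lemma frobN (A S : 'M[R]_n) : frob (- A) S = - frob A S.
Proof. by rewrite /frob mulNmx linearN. Qed.

Lemma frobC (A S : 'M[R]_n) : frob A S = frob S A.
Proof. exact: mxtrace_mulC. Qed.

Lemma frob_diag_mx (d : 'rV[R]_n) S : frob (diag_mx d) S = \sum_j d 0 j * S j j.
Proof. by rewrite /frob mul_diag_mx /mxtrace; apply: eq_bigr => j _; rewrite mxE. Qed.

Lemma Esym_delta p q :
  Esym R n p.+1 q.+1 = if p == q then delta_mx p p else delta_mx p q + delta_mx q p.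
Proof.
apply/matrixP => k l; rewrite /Esym !mxE !eqSS.
have nat_eq_ord (x y : 'I_n) : (nat_of_ord x == nat_of_ord y) = (x == y) by [].
rewrite !nat_eq_ord.
have [<-|neq_pq] := eqVneq p q; first by rewrite orbb !mxE; case: (_ && _).
rewrite !mxE; have [->|_] := eqVneq k p; last case: (k == q);
  by rewrite ?(negbTE neq_pq) /= ?orbF ?addr0 ?add0r; case: (l == _).
Qed.

Lemma frob_Esym p q S :
  frob (Esym R n p.+1 q.+1) S = if p == q then S p p else S p q + S q p.
Proof.
rewrite Esym_delta; case: (p == q); first by rewrite /frob mxtrace_delta_mul.
by rewrite frobD /frob !mxtrace_delta_mul addrC.
Qed.

End QuadraticForm.

Section Psd.
Context {R : realDomainType} {n : nat}.
Implicit Types (S : 'M[R]_n) (p q : 'I_n).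

Lemma psd_sym {S} p q : psd S -> S q p = S p q.
Proof. by case=> symS _; rewrite -{1}symS mxE. Qed.

Lemma psd_diag_ge0 {S} p : psd S -> 0 <= S p p.
Proof. by case=> _ /(_ (delta_mx p 0)); rewrite quad_form_delta mxE mulr1n. Qed.

Lemma psd_diag0_col {S} p q : psd S -> S q q = 0 -> S p q = 0.
Proof.
move=> psdS Sqq0; have Spp_ge0 := psd_diag_ge0 p psdS.
(* At this vector the form equals - S_pq^2 (S_pp + 2). *)
have := psdS.2 ((- S p q) *: delta_mx p 0 + (S p p + 1) *: delta_mx q 0).
rewrite quad_form_delta_pair Sqq0 (psd_sym p q psdS) => form_ge0.
have : S p q ^+ 2 * (S p p + 2) <= 0 by nra.
rewrite pmulr_lle0; last by lra.
by rewrite le_eqVlt ltNge sqr_ge0 orbF sqrf_eq0 => /eqP.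
Qed.

Lemma psd_diag_mx (d : 'rV[R]_n) :
  (forall j, 0 <= d 0 j) -> psd (diag_mx d).
Proof.
move=> d_ge0; split; first exact: tr_diag_mx.
move=> v; rewrite mul_mx_diag mxE; apply: sumr_ge0 => j _.
by rewrite !mxE mulrAC -expr2 mulr_ge0 ?sqr_ge0.
Qed.

Lemma frob_Esym_diag0 S p q :
  psd S -> S p p = 0 -> frob (Esym R n p.+1 q.+1) S = 0.
Proof.
move=> psdS Spp0; rewrite frob_Esym; case: eqP => // _.
by rewrite -(psd_sym p q psdS) (psd_diag0_col q p psdS Spp0) addr0.
Qed.

End Psd.

Ltac decide_nat_eqs :=
  repeat match goal with |- context [(?x == ?y)%N] =>
    let H := fresh in case: (x =P y) => H; try (exfalso; lia) end.

Section Problem.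
Context {R : realDomainType} {m : nat} (m_ge2 : (2 <= m)%N).
Local Notation n := (2 * m + 1)%N.
Implicit Types Y : 'M[R]_n.

(* The paper's 1-based index k as an element of 'I_n; the reduction modulo n
   only makes it total and is vacuous for 0 < k <= n. *)
Definition pos (k : nat) : 'I_n := Ordinal (ltn_pmod k.-1 (ltn_addl (2 * m) (ltn0Sn 0))).

Lemma pos_val k : (0 < k <= n)%N -> pos k = k.-1 :> nat.
Proof. by move=> k_range; rewrite /= modn_small //; lia. Qed.

Lemma pos_eq k l : (0 < k <= n)%N -> (0 < l <= n)%N -> (pos k == pos l) = (k == l).
Proof. by move=> k_range l_range; rewrite -val_eqE /= !modn_small; lia. Qed.

Lemma Esym_pos i j : (0 < i <= n)%N -> (0 < j <= n)%N ->
  Esym R n i j = Esym R n (pos i).+1 (pos j).+1.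
Proof. by move=> i_range j_range; rewrite !pos_val // !prednK //; lia. Qed.

Lemma frob_Esym_pos Y i : (0 < i <= n)%N ->
  frob (Esym R n i i) Y = Y (pos i) (pos i).
Proof. by move=> i_range; rewrite Esym_pos // frob_Esym eqxx. Qed.

Lemma frob_Esym_pos_diag0 {Y i j} : psd Y -> Y (pos i) (pos i) = 0 ->
  (0 < i <= n)%N -> (0 < j <= n)%N -> frob (Esym R n i j) Y = 0.
Proof. by move=> psdY Yii0 i_range j_range; rewrite Esym_pos // frob_Esym_diag0. Qed.

Ltac compute_entry :=
  decide_nat_eqs; rewrite !mxE !pos_val /=; try lia; decide_nat_eqs; rewrite /=; ring.

Lemma Amat_entry_nn i : (0 < i <= m)%N -> Amat R m i (pos n) (pos n) = 0.
Proof. by move=> i_range; rewrite /Amat; compute_entry. Qed.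

Lemma Amat_entry_predm_n i : (0 < i <= m)%N -> Amat R m i (pos m.-1) (pos n) = cvec R m i.
Proof. by move=> i_range; rewrite /Amat /cvec; compute_entry. Qed.

Lemma Amat_entry_mm i : (0 < i <= m)%N -> Amat R m i (pos m) (pos m) = cvec R m i.
Proof. by move=> i_range; rewrite /Amat /cvec; compute_entry. Qed.

Lemma Bmat_entry k l : (0 < k <= n)%N -> (0 < l <= n)%N ->
  Bmat R m (pos k) (pos l) = ((k == l) && (k <= m.+1)%N)%:R.
Proof.
move=> k_range l_range; rewrite mxE pos_eq // pos_val //.
have -> : (k.-1 < m + 1)%N = (k <= m.+1)%N by lia.
by case: (_ && _).
Qed.

Lemma frob_Amat_first Y :
  frob (Amat R m 1) Y = Y (pos 1) (pos 1) + Y (pos (m + 1)) (pos (m + 1)).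
Proof. by rewrite /Amat /= frobD !frob_Esym_pos //; lia. Qed.

Lemma frob_Amat_succ {Y i} : psd Y ->
  Y (pos i) (pos i) = 0 -> Y (pos (m + i)) (pos (m + i)) = 0 -> (0 < i)%N -> (i.+1 < m)%N ->
  frob (Amat R m i.+1) Y = Y (pos i.+1) (pos i.+1) + Y (pos (m + i.+1)) (pos (m + i.+1)).
Proof.
move=> psdY Yii0 Ymi0 i_gt0 i_lt; rewrite /Amat; decide_nat_eqs.
have -> : (i.+1 - 1 = i)%N by lia.
have -> : (m + i.+1 - 1 = m + i)%N by lia.
rewrite !frobD (frob_Esym_pos_diag0 psdY Yii0) ?(frob_Esym_pos_diag0 psdY Ymi0);
  rewrite ?frob_Esym_pos ?addr0 //; lia.
Qed.

Lemma frob_Amat_last {Y} : psd Y ->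
  Y (pos m.-1) (pos m.-1) = 0 -> Y (pos (m + m.-1)) (pos (m + m.-1)) = 0 ->
  frob (Amat R m m) Y = Y (pos m) (pos m) - Y (pos (2 * m)) (pos (2 * m)).
Proof.
move=> psdY Ypp0 Ymp0; rewrite /Amat; decide_nat_eqs.
have -> : (m - 1 = m.-1)%N by lia.
have -> : (2 * m - 1 = m + m.-1)%N by lia.
rewrite !frobD frobN (frob_Esym_pos_diag0 psdY Ypp0) ?(frob_Esym_pos_diag0 psdY Ymp0);
  rewrite ?frob_Esym_pos ?addr0 //; lia.
Qed.

Lemma diag_mx_delta (p : 'I_n) : diag_mx (delta_mx 0 p) = delta_mx p p :> 'M[R]_n.
Proof.
apply/matrixP => k l; rewrite !mxE /=.
have [<-|nkl] := eqVneq k l; first by rewrite mulr1n andbb.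
by have [kp|] := eqVneq k p; rewrite /= ?mulr0n // -kp eq_sym (negbTE nkl).
Qed.

Lemma Bmat_diag : Bmat R m = diag_mx (\row_k ((k < m + 1)%N)%:R).
Proof. by apply/matrixP => k l; rewrite !mxE eq_sym; case: (k < _)%N; case: (_ == _). Qed.

Lemma psd_Bmat : psd (Bmat R m).
Proof. by rewrite Bmat_diag; apply: psd_diag_mx => j; rewrite mxE ler0n. Qed.

Lemma frob_Bmat_ge {Y} : psd Y -> Y (pos m) (pos m) <= frob (Bmat R m) Y.
Proof.
move=> psdY; rewrite Bmat_diag frob_diag_mx (bigD1 (pos m)) //= mxE pos_val; try lia.
have -> : (m.-1 < m + 1)%N by lia.
rewrite mul1r lerDl; apply: sumr_ge0 => j _.
by rewrite mxE mulr_ge0 ?ler0n ?psd_diag_ge0.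
Qed.

Lemma dual_feasible_frob_Amat {Y} k : dual_feasible Y -> (0 < k <= m)%N ->
  frob (Amat R m k) Y = cvec R m k.
Proof.
case=> Ai_eq _ /andP[k_gt0 k_le]; have k_lt : (k.-1 < m)%N by lia.
by have := Ai_eq (Ordinal k_lt); rewrite /= prednK.
Qed.

Lemma dual_feasible_diag0 {Y} i : dual_feasible Y -> (0 < i < m)%N ->
  Y (pos i) (pos i) = 0 /\ Y (pos (m + i)) (pos (m + i)) = 0.
Proof.
move=> dualY; have psdY := dualY.2.
have diag_ge0 k : 0 <= Y (pos k) (pos k) by apply: psd_diag_ge0.
elim: i => [//|[_ _|i IH i_range]].
  have := dual_feasible_frob_Amat 1 dualY ltac:(lia); rewrite frob_Amat_first /cvec.
  have -> : (1 == m)%N = false by lia.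
  by have := diag_ge0 1%N; have := diag_ge0 (m + 1)%N; move=> *; split; lra.
have [Yii0 Ymi0] := IH ltac:(lia).
have := dual_feasible_frob_Amat i.+2 dualY ltac:(lia).
rewrite (frob_Amat_succ psdY Yii0 Ymi0) /cvec; try lia.
have -> : (i.+2 == m)%N = false by lia.
by have := diag_ge0 i.+2; have := diag_ge0 (m + i.+2)%N; move=> *; split; lra.
Qed.

Lemma dual_feasible_diag_m {Y} : dual_feasible Y -> 1 <= Y (pos m) (pos m).
Proof.
move=> dualY; have [Ypp0 Ymp0] := dual_feasible_diag0 m.-1 dualY ltac:(lia).
have := dual_feasible_frob_Amat m dualY ltac:(lia); rewrite (frob_Amat_last dualY.2 Ypp0 Ymp0) /cvec eqxx.
by have := psd_diag_ge0 (pos (2 * m)) dualY.2; lra.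
Qed.

Lemma dual_obj_ge1 {Y} : dual_feasible Y -> 1 <= frob (Bmat R m) Y.
Proof.
by move=> dualY; apply: le_trans (dual_feasible_diag_m dualY) (frob_Bmat_ge dualY.2).
Qed.

Lemma dual_feasible_Esym_m : dual_feasible (Esym R n m m).
Proof.
split=> [i|].
  by rewrite frobC frob_Esym_pos ?Amat_entry_mm //; [exact: ltn_ord | lia].
rewrite Esym_pos ?Esym_delta ?eqxx -?diag_mx_delta; try lia.
by apply: psd_diag_mx => j; rewrite mxE ler0n.
Qed.

Lemma dual_obj_Esym_m : frob (Bmat R m) (Esym R n m m) = 1.
Proof. by rewrite frobC frob_Esym_pos ?Bmat_entry ?eqxx ?leqnSn //; lia. Qed.

Lemma primal_feasible_obj0 {x : 'cV[R]_m} : primal_feasible x -> primal_obj x = 0.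
Proof.
rewrite /primal_feasible /loewner_le; set S := _ - _ => psdS.
have S_entry k l : S k l = Bmat R m k l - \sum_(i < m) x i 0 * Amat R m i.+1 k l.
  by rewrite !mxE summxE; congr (_ - _); apply: eq_bigr => i _; rewrite mxE.
have Snn0 : S (pos n) (pos n) = 0.
  rewrite S_entry Bmat_entry ?eqxx /=; try lia.
  have -> : (n <= m.+1)%N = false by lia.
  rewrite big1 ?subr0 // => i _.
  by rewrite Amat_entry_nn ?mulr0 //; apply: ltn_ord.
have := psd_diag0_col (pos m.-1) _ psdS Snn0.
rewrite S_entry Bmat_entry; try lia.
have -> : (m.-1 == n)%N = false by lia.
rewrite (eq_bigr (fun i : 'I_m => cvec R m i.+1 * x i 0)); last first.
  by move=> i _; rewrite mulrC Amat_entry_predm_n //; apply: ltn_ord.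
by rewrite sub0r => /eqP; rewrite oppr_eq0 => /eqP.
Qed.

Lemma primal_feasible0 : primal_feasible (0 : 'cV[R]_m).
Proof.
rewrite /primal_feasible /loewner_le big1 ?subr0; first exact: psd_Bmat.
by move=> i _; rewrite mxE scale0r.
Qed.

End Problem.

Theorem mainTheorem8 (R : rcfType) (m : nat) (hm : (2 <= m)%N) :
  is_sup (fun v : R => exists x : 'cV[R]_m, primal_feasible x /\ v = primal_obj x) 0
  /\ is_inf (fun v : R => exists Y : 'M[R]_(2 * m + 1),
                dual_feasible Y /\ v = frob (Bmat R m) Y) 1
  /\ (0 : R) < 1.
Proof.
split; [split|split; [split|exact: ltr01]].
- by move=> _ [x [feas_x ->]]; rewrite (primal_feasible_obj0 hm feas_x).
- move=> u ub_u; apply: ub_u; exists 0; split; first exact: primal_feasible0.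
  by rewrite (primal_feasible_obj0 hm primal_feasible0).
- by move=> _ [Y [feas_Y ->]]; exact: (dual_obj_ge1 hm feas_Y).
- move=> u lb_u; rewrite -(dual_obj_Esym_m (R := R) hm); apply: lb_u.
  by exists (Esym R (2 * m + 1) m m); split; first exact: dual_feasible_Esym_m.
Qed.
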